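(* Let $\succeq$ be a complete and transitive preference relation on $\mathcal{L}$ that is continuous with respect to convergence in probability, satisfies state-wise monotonicity, and is regret based. Then for any $X,Y\in\mathcal{L}$ with $F_X=F_Y$ (i.e., $X$ and $Y$ have the same cumulative distribution function), we have $X\sim Y$ (i.e., $X\succeq Y$ and $Y\succeq X$).
   Context: Fix a bounded interval of outcomes $[\underline x,\bar x]\subset\mathbb{R}$. Let $(S,\Sigma,\mathrm{P})$ be the probability space with $S=[0,1]$, $\Sigma$ the Borel $\sigma$-algebra on $[0,1]$, and $\mathrm{P}$ Lebesgue measure. $\mathcal{L}$ is the set of measurable random variables $X:S\to[\underline x,\bar x]$ taking only finitely many values; such $X$ is written $X=(x_1,S_1;\ldots;x_n,S_n)$, meaning $X=x_i$ on the event $S_i$, where $S_1,\ldots,S_n$ is a measurable partition of $S$. $F_X$ denotes the cdf of $X$. A preference relation $\succeq$ on $\mathcal{L}$ is a binary relation; $\succ$ and $\sim$ are its strict and indifference parts. A regret function is a continuous $\psi:[\underline x,\bar x]\times[\underline x,\bar x]\to\mathbb{R}$ with $\psi(x,x)=0$ for all $x$, $\psi(x,y)$ strictly increasing in $x$ and strictly decreasing in $y$. For $X=(x_1,S_1;\ldots;x_n,S_n)$ and $Y=(y_1,S_1;\ldots;y_n,S_n)$ written on a common partition, the regret lottery is the finite-support lottery $\Psi(X,Y)=(\psi(x_1,y_1),p_1;\ldots;\psi(x_n,y_n),p_n)$ with $p_i=\mathrm{P}(S_i)$ (i.e., the distribution of $s\mapsto\psi(X(s),Y(s))$). The relation $\succeq$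 is regret based if there exist a regret function $\psi$ and a continuous real-valued functional $V$ defined on the set of regret lotteries $\{\Psi(X,Y):X,Y\in\mathcal{L}\}$ such that for all $X,Y\in\mathcal{L}$: $X\succeq Y$ iff $V(\Psi(X,Y))\geqslant 0$. A sequence $X^k\in\mathcal{L}$ converges in probability to $X\in\mathcal{L}$ if for every $\varepsilon>0$, $\lim_{k\to\infty}\mathrm{P}(|X^k-X|\geqslant\varepsilon)=0$. $\succeq$ is continuous with respect to convergence in probability if, whenever $X^k\to X$ in probability: $X^k\succeq Y$ for all $k$ implies $X\succeq Y$, and $Y\succeq X^k$ for all $k$ implies $Y\succeq X$. $\succeq$ satisfies state-wise monotonicity if for any measurable partition $S_1,\ldots,S_n$ of $S$ and any $X=(x_1,S_1;\ldots;x_n,S_n)$, $Y=(y_1,S_1;\ldots;y_n,S_n)$ with $x_i\geqslant y_i$ for all $i$ and at least one strict inequality, $X\succ Y$. *)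

From HB Require Import structures.
From mathcomp Require Import all_boot all_order all_algebra.
From mathcomp Require Import all_classical all_reals all_analysis.
Set Implicit Arguments. Unset Strict Implicit. Unset Printing Implicit Defensive.
Import Order.TTheory GRing.Theory Num.Theory.
Import numFieldNormedType.Exports.
Local Open Scope classical_set_scope.
Local Open Scope ring_scope.

Section Defs.
Variable R : realType.

Definition Sset : set R := [set s | 0 <= s <= 1].

(* P = Lebesgue measure on S, real valued (it is finite). *)
Definition Prob (A : set R) : R := fine (lebesgue_measure (A `&` Sset)).

(* Random variables are functions R -> R; only their restriction to S matters. *)
Definition inL (xl xu : R) (X : R -> R) : Prop :=
  [/\ measurable_fun Sset X,
      (forall s, Sset s -> xl <= X s <= xu) &
      finite_set (X @` Sset)].

Definition cdfX (X : R -> R) (t : R) : R := Prob [set s | X s <= t].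

Definition cvg_in_prob (Xk : nat -> R -> R) (X : R -> R) : Prop :=
  forall eps : R, 0 < eps ->
    (fun k => Prob [set s | eps <= `|Xk k s - X s|]) @ \oo --> (0 : R).

Definition complete_rel xl xu (pref : (R -> R) -> (R -> R) -> Prop) :=
  forall X Y, inL xl xu X -> inL xl xu Y -> pref X Y \/ pref Y X.

Definition transitive_rel xl xu (pref : (R -> R) -> (R -> R) -> Prop) :=
  forall X Y Z, inL xl xu X -> inL xl xu Y -> inL xl xu Z ->
    pref X Y -> pref Y Z -> pref X Z.

Definition strict_pref (pref : (R -> R) -> (R -> R) -> Prop) X Y :=
  pref X Y /\ ~ pref Y X.

Definition indiff (pref : (R -> R) -> (R -> R) -> Prop) X Y :=
  pref X Y /\ pref Y X.

Definition continuous_in_prob xl xu (pref : (R -> R) -> (R -> R) -> Prop) :=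
  forall (Xk : nat -> R -> R) (X Y : R -> R),
    (forall k, inL xl xu (Xk k)) -> inL xl xu X -> inL xl xu Y ->
    cvg_in_prob Xk X ->
    ((forall k, pref (Xk k) Y) -> pref X Y) /\
    ((forall k, pref Y (Xk k)) -> pref Y X).

Definition meas_partition (n : nat) (Sc : 'I_n -> set R) : Prop :=
  [/\ (forall i, measurable (Sc i)),
      (forall i, Sc i `<=` Sset),
      (forall i j, i != j -> Sc i `&` Sc j = set0) &
      (forall s, Sset s -> exists i, Sc i s)].

Definition written_on (n : nat) (Sc : 'I_n -> set R) (x : 'I_n -> R)
  (X : R -> R) : Prop := forall i s, Sc i s -> X s = x i.

Definition statewise_monotone xl xu (pref : (R -> R) -> (R -> R) -> Prop) :=
  forall (n : nat) (Sc : 'I_n -> set R) (x y : 'I_n -> R) (X Y : R -> R),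
    inL xl xu X -> inL xl xu Y -> meas_partition Sc ->
    written_on Sc x X -> written_on Sc y Y ->
    (forall i, y i <= x i) ->
    (exists i, y i < x i /\ 0 < Prob (Sc i)) ->
    strict_pref pref X Y.

Definition regret_fun (xl xu : R) (psi : R -> R -> R) : Prop :=
  let I := [set x : R | xl <= x <= xu] in
  [/\ {within I `*` I, continuous (fun p : R * R => psi p.1 p.2)},
      (forall x, I x -> psi x x = 0),
      (forall x x' y, I x -> I x' -> I y -> x < x' -> psi x y < psi x' y) &
      (forall x y y', I x -> I y -> I y' -> y < y' -> psi x y' < psi x y)].

(* The regret lottery Psi(X,Y), represented by its cdfX
   t |-> P(psi(X,Y) <= t). *)
Definition regret_lottery (psi : R -> R -> R) (X Y : R -> R) : R -> R :=
  cdfX (fun s => psi (X s) (Y s)).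

Definition weak_cvg (Gk : nat -> R -> R) (G : R -> R) : Prop :=
  forall t, {for t, continuous G} -> (fun k => Gk k t) @ \oo --> G t.

Definition continuous_on_regret_lotteries xl xu (psi : R -> R -> R)
  (V : (R -> R) -> R) : Prop :=
  forall (Xk Yk : nat -> R -> R) (X Y : R -> R),
    (forall k, inL xl xu (Xk k)) -> (forall k, inL xl xu (Yk k)) ->
    inL xl xu X -> inL xl xu Y ->
    weak_cvg (fun k => regret_lottery psi (Xk k) (Yk k)) (regret_lottery psi X Y) ->
    (fun k => V (regret_lottery psi (Xk k) (Yk k))) @ \oo -->
      V (regret_lottery psi X Y).

Definition regret_based xl xu (pref : (R -> R) -> (R -> R) -> Prop) : Prop :=
  exists (psi : R -> R -> R) (V : (R -> R) -> R),
    [/\ regret_fun xl xu psi,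
        continuous_on_regret_lotteries xl xu psi V &
        forall X Y, inL xl xu X -> inL xl xu Y ->
          (pref X Y <-> 0 <= V (regret_lottery psi X Y))].

End Defs.

From mathcomp Require Import all_boot all_order all_algebra.
From mathcomp Require Import all_classical all_reals all_analysis.
Set Implicit Arguments. Unset Strict Implicit. Unset Printing Implicit Defensive.
Import Order.TTheory GRing.Theory Num.Theory.
Local Open Scope classical_set_scope.
Local Open Scope ring_scope.

(* The regret lottery Psi(X, Y) only depends on the joint law of (X, Y).  When X and Y
   are equally distributed on a finite range a_0, ..., a_(n-1), the matrix
   q i j = P(X = a_i, Y = a_j) has equal row and column sums: it is a circulation, hence
   a nonnegative combination of closed walks.  Laying all rotations of these walks side
   by side on [0, 1] yields Z_0, Z_1, ..., Z_M = Z_0 such that every (Z_k, Z_(k+1)) has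
   the joint law of (X, Y).  If X were strictly preferred to Y, regret-basedness would
   give Z_k >= Z_(k+1) for all k, hence Z_1 >= Z_M = Z_0 by transitivity, although
   (Z_1, Z_0) has the joint law of (Y, X). *)

Definition has_period (T : Type) (M : nat) (w : nat -> T) := forall l, w (l + M)%N = w l.

Lemma has_period_modn (T : Type) M (w : nat -> T) :
  has_period M w -> forall l, w (l %% M)%N = w l.
Proof.
move=> per l; rewrite {2}(divn_eq l M); elim: (l %/ M)%N => [|k IH].
  by rewrite mul0n add0n.
by rewrite mulSn -addnA addnC per IH.
Qed.

Lemma has_period_addmodn (T : Type) M (w : nat -> T) l k :
  has_period M w -> w (l + k %% M)%N = w (l + k)%N.
Proof. by move=> per; rewrite -(has_period_modn per) modnDmr has_period_modn. Qed.

Lemma sum_shift_period M (f : nat -> nat) k : has_period M f ->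
  (\sum_(0 <= l < M) f (l + k) = \sum_(0 <= l < M) f l)%N.
Proof.
move=> per; elim: k => [|k IH]; first by under eq_bigr do rewrite addn0.
rewrite -{}IH; case: M per => [|M] per; first by rewrite !big_geq.
under eq_bigr do rewrite -addSnnS.
rewrite big_nat_recr //= [RHS]big_nat_recl //=.
by rewrite addnC add0n [(M.+1 + k)%N]addnC per.
Qed.

(* Two of the first n + 1 iterates coincide, so from step n on the orbit has a period
   L <= n, and L divides n`!. *)
Lemma iter_has_period_fact n (f : 'I_n -> 'I_n) (x : 'I_n) :
  has_period n`! (fun l => iter (n + l) f x).
Proof.
move=> u /=; rewrite addnA.
have /injectivePn [k1 [k2 ne12 e12]] : ~~ injectiveb (fun k : 'I_n.+1 => iter k f x).
  apply/negP => /injectiveP inj; have := leq_card _ inj.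
  by rewrite !card_ord ltnn.
wlog lt12 : k1 k2 ne12 e12 / (k1 < k2)%N.
  move=> W; have [lt|gt|eq] := ltngtP k1 k2; first exact: (W k1 k2).
    by apply: (W k2 k1); rewrite // eq_sym.
  by move: ne12; rewrite -(inj_eq val_inj) /= eq eqxx.
pose L := (k2 - k1)%N.
have step v : iter (k1 + v + L) f x = iter (k1 + v) f x.
  rewrite -addnA (addnC v) addnA /L subnKC ?(ltnW lt12) //.
  by rewrite addnC iterD /= -e12 -iterD addnC.
have steps c v : iter (k1 + v + c * L) f x = iter (k1 + v) f x.
  elim: c => [|c IH]; first by rewrite mul0n addn0.
  by rewrite mulSn addnA -addnA (addnC L) addnA -(addnA k1 v) step addnA IH.
have [c ->] : exists c, n`! = (c * L)%N.
  exists (n`! %/ L)%N; rewrite divnK // dvdn_fact // subn_gt0 lt12 /L.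
  by rewrite (leq_trans (leq_subr _ _)) // -ltnS.
have k1n : (k1 <= n)%N by rewrite -ltnS.
by rewrite (_ : n + u = k1 + (n - k1 + u))%N ?steps // addnA subnKC.
Qed.

Section ClosedWalks.
Variables n M : nat.
Implicit Type w : nat -> 'I_n.

Definition transitions w (i j : 'I_n) : nat :=
  (\sum_(0 <= l < M) ((w l == i) && (w l.+1 == j)))%N.

Lemma transitions_shift w k i j : has_period M w ->
  transitions (fun l => w (l + k)%N) i j = transitions w i j.
Proof.
move=> per; rewrite /transitions; under eq_bigr do rewrite addSn.
apply: (sum_shift_period (f := fun l => nat_of_bool ((w l == i) && (w l.+1 == j)))).
by move=> l /=; rewrite -addSn !per.
Qed.

Lemma transitions_gt0 (e : rel 'I_n) w i j : (forall l, e (w l) (w l.+1)) ->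
  (0 < transitions w i j)%N -> e i j.
Proof.
move=> ew; apply: contraLR => nij; rewrite -leqNgt leqn0; apply/eqP/big1 => l _.
by case: eqP => [wi|] //=; case: eqP => [wj|] //=; move: nij; rewrite -wi -wj ew.
Qed.

Lemma transitions_start w : (0 < M)%N -> (0 < transitions w (w 0%N) (w 1%N))%N.
Proof. by move=> M0; rewrite /transitions big_ltn // !eqxx. Qed.

Lemma sum_transitions_src w i :
  (\sum_j transitions w i j = \sum_(0 <= l < M) (w l == i))%N.
Proof.
rewrite /transitions exchange_big /=; apply: eq_bigr => l _.
rewrite (bigD1 (w l.+1)) //= eqxx andbT big1 ?addn0 // => j.
by rewrite eq_sym => /negbTE ->; rewrite andbF.
Qed.

Lemma sum_transitions_dst w j :
  (\sum_i transitions w i j = \sum_(0 <= l < M) (w l.+1 == j))%N.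
Proof.
rewrite /transitions exchange_big /=; apply: eq_bigr => l _.
rewrite (bigD1 (w l)) //= eqxx big1 ?addn0 // => i.
by rewrite eq_sym => /negbTE ->.
Qed.

Lemma transitions_balanced w i : has_period M w ->
  (\sum_j transitions w i j = \sum_j transitions w j i)%N.
Proof.
move=> per; rewrite sum_transitions_src sum_transitions_dst.
rewrite -(sum_shift_period (f := fun l => nat_of_bool (w l == i)) 1) => [|l /=].
  by under eq_bigr do rewrite addn1.
by rewrite per.
Qed.

Lemma transitions_total w : (\sum_i \sum_j transitions w i j = M)%N.
Proof.
under eq_bigr do rewrite sum_transitions_src.
rewrite exchange_big /= -[RHS]muln1 -[M in RHS]subn0 -sum_nat_const_nat.
apply: eq_bigr => l _; rewrite (bigD1 (w l)) //= eqxx big1 // => i.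
by rewrite eq_sym => /negbTE ->.
Qed.

End ClosedWalks.

Section Circulations.
Variables (R : realFieldType) (n : nat).
Implicit Type q : 'I_n -> 'I_n -> R.
Local Notation M := n`!.

Definition circulation q :=
  (forall i j, 0 <= q i j) /\ (forall i, \sum_j q i j = \sum_j q j i).

Definition arcs q := [set p : 'I_n * 'I_n | q p.1 p.2 != 0]%SET.

Lemma circulation_closed_walk q i0 j0 : circulation q -> 0 < q i0 j0 ->
  exists w, has_period M w /\ forall l, 0 < q (w l) (w l.+1).
Proof.
move=> [q0 bal] qij.
(* Balance: a vertex entered through a positive arc also has a positive outgoing arc. *)
pose succ v := if [pick j | 0 < q v j] is Some j then j else v.
have succ_gt0 v : [exists j, 0 < q v j] -> 0 < q v (succ v).
  by rewrite /succ; case: pickP => [//|none /existsP [j]]; rewrite none.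
have succ_out v : 0 < q v (succ v) -> [exists j, 0 < q (succ v) j].
  apply: contraLR => /existsPn none.
  have : \sum_j q (succ v) j = 0.
    by apply: big1 => j _; apply/eqP; rewrite eq_le q0 andbT leNgt none.
  rewrite bal (bigD1 v) //= => /eqP; rewrite paddr_eq0 ?q0 ?sumr_ge0 //.
  by case/andP => /eqP ->; rewrite ltxx.
have active m : [exists j, 0 < q (iter m succ i0) j].
  by elim: m => [|m IH]; [apply/existsP; exists j0 | exact/succ_out/succ_gt0].
exists (fun l => iter (n + l) succ i0); split; first exact: iter_has_period_fact.
by move=> l; rewrite addnS; apply: succ_gt0.
Qed.

Lemma circulation_peel q w : circulation q -> has_period M w ->
  (forall l, 0 < q (w l) (w l.+1)) ->
  exists2 eps, 0 < eps &
    circulation (fun i j => (q i j - eps * (transitions M w i j)%:R)%R) /\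
    (#|arcs (fun i j => (q i j - eps * (transitions M w i j)%:R)%R)| < #|arcs q|)%N.
Proof.
move=> [q0 bal] per wq.
set C := transitions M w.
have Cq i j : (0 < C i j)%N -> 0 < q i j.
  exact: (transitions_gt0 (e := fun i j => 0 < q i j)).
pose P (p : 'I_n * 'I_n) := (0 < C p.1 p.2)%N.
have P0 : P (w 0%N, w 1%N) by apply: transitions_start; exact: fact_gt0.
have [p Pp pmin] := arg_minP (fun p => q p.1 p.2 / (C p.1 p.2)%:R) P0.
set eps := q p.1 p.2 / _ in pmin *.
(* eps is the largest multiple of the transition counts of w below q: it empties arc p. *)
have eps0 : 0 < eps by rewrite divr_gt0 ?Cq ?ltr0n.
exists eps => //; split; first split.
- move=> i j; rewrite subr_ge0; have [->|Cij] := posnP (C i j).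
    by rewrite mulr0 q0.
  by rewrite -ler_pdivlMr ?ltr0n //; exact: (pmin (i, j)).
- move=> i; rewrite !sumrB -!mulr_sumr -!natr_sum bal.
  by rewrite (transitions_balanced _ per).
apply: proper_card; apply/properP; split.
  apply/fintype.subsetP => ij; rewrite !inE; apply: contraNN => /eqP qij.
  have /eqP -> : C ij.1 ij.2 == 0%N.
    by rewrite -leqn0 leqNgt; apply/negP => /Cq; rewrite qij ltxx.
  by rewrite qij mulr0 subr0.
exists p; rewrite !inE; first by rewrite gt_eqF ?Cq.
by rewrite negbK /eps divfK ?subrr // pnatr_eq0 -lt0n.
Qed.

Lemma circulation_decomposition q : circulation q ->
  exists m (c : 'I_m -> R) (w : 'I_m -> nat -> 'I_n),
    [/\ forall b, 0 <= c b, forall b, has_period M (w b) &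
        forall i j, q i j = \sum_b c b * (transitions M (w b) i j)%:R].
Proof.
elim: {q}_.+1 {-2}q (ltnSn #|arcs q|) => // k IH q arcs_k cq.
have [/cards0_eq arcs0|/card_gt0P [[i0 j0]]] := posnP #|arcs q|.
  exists 0%N, (fun=> 0), (fun b _ => widen_ord (leq0n n) b).
  split=> [[]|[]|i j] //; rewrite big_ord0.
  by have /setP/(_ (i, j)) := arcs0; rewrite !inE => /negbFE/eqP.
rewrite inE /= => qij; have [q0 _] := cq.
have qij_gt0 : 0 < q i0 j0 by rewrite lt_def qij q0.
have [w [per wq]] := circulation_closed_walk cq qij_gt0.
have [eps eps0 [cq' arcs_lt]] := circulation_peel cq per wq.
have [m [c [ws [c0 ws_per qE]]]] := IH _ (leq_trans arcs_lt arcs_k) cq'.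
exists m.+1, (fun b => oapp c eps (unlift ord0 b)), (fun b => oapp ws w (unlift ord0 b)).
split=> [b|b|i j].
- by case: (unlift ord0 b) => [b'|] /=; [exact: c0 | exact: ltW].
- by case: (unlift ord0 b) => [b'|] /=; [exact: ws_per|].
- rewrite big_ord_recl unlift_none /=; under eq_bigr do rewrite liftK /=.
  by rewrite -qE addrC subrK.
Qed.

Lemma decomposition_mass q m (c : 'I_m -> R) (w : 'I_m -> nat -> 'I_n) :
  (forall i j, q i j = \sum_b c b * (transitions M (w b) i j)%:R) ->
  \sum_i \sum_j q i j = (\sum_b c b) * M%:R.
Proof.
move=> qE; under eq_bigr do under eq_bigr do rewrite qE.
under eq_bigr do rewrite exchange_big /=; rewrite exchange_big mulr_suml /=.
apply: eq_bigr => b _; rewrite -[in RHS](transitions_total M (w b)) natr_sum mulr_sumr.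
by apply: eq_bigr => i _; rewrite natr_sum mulr_sumr.
Qed.

End Circulations.

Section Probability.
Variable R : realType.
Local Notation S := (@Sset R).
Local Notation leb := (@lebesgue_measure R).
Implicit Types (A B : set R) (Z W : R -> R).

Lemma Sset_itv : S = `[0, 1]%classic.
Proof. by apply/seteqP; split => x; rewrite /= in_itv. Qed.

Lemma measurable_Sset : measurable S.
Proof. by rewrite Sset_itv. Qed.

Lemma lebesgue_Sset : leb S = 1%E.
Proof. by rewrite Sset_itv lebesgue_measure_itv /= lte_fin ltr01 oppr0 adde0. Qed.

Lemma lebesgue_ProbE A : measurable (A `&` S) -> leb (A `&` S) = (Prob A)%:E.
Proof.
move=> mA; rewrite /Prob fineK // ge0_fin_numE //.
apply: (le_lt_trans (le_measure _ _ _ _)).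
- by rewrite inE.
- by rewrite inE; exact: measurable_Sset.
- exact: subIsetr.
- by change (leb S < +oo)%E; rewrite lebesgue_Sset ltry.
Qed.

Lemma Prob_ge0 A : measurable (A `&` S) -> 0 <= Prob A.
Proof. by move=> mA; rewrite -lee_fin -lebesgue_ProbE. Qed.

Lemma eq_Prob A B : A `&` S = B `&` S -> Prob A = Prob B.
Proof. by rewrite /Prob => ->. Qed.

Lemma Prob0 A : A `&` S = set0 -> Prob A = 0.
Proof. by rewrite /Prob => ->; rewrite measure0. Qed.

Lemma ProbT : Prob [set: R] = 1.
Proof. by rewrite /Prob setTI lebesgue_Sset. Qed.

Lemma ProbU A B : measurable (A `&` S) -> measurable (B `&` S) ->
  A `&` B `&` S = set0 -> Prob (A `|` B) = Prob A + Prob B.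
Proof.
move=> mA mB AB0; rewrite {1}/Prob setIUl measureU //; last by rewrite setIACA setIid.
rewrite -[RHS]/(fine ((Prob A)%:E + (Prob B)%:E)).
by congr (fine (_ + _)%E); exact: lebesgue_ProbE.
Qed.

Lemma measurable_preimage Z B : measurable_fun S Z -> measurable B ->
  measurable ([set x | B (Z x)] `&` S).
Proof. by move=> mZ mB; rewrite setIC; exact: mZ measurable_Sset _ mB. Qed.

Lemma measurable_level Z c : measurable_fun S Z -> measurable ([set x | Z x = c] `&` S).
Proof. by move=> mZ; exact: measurable_preimage mZ (measurable_set1 c). Qed.

Lemma Prob_sum_values (T : eqType) (V : R -> T) (r : seq T) A : uniq r ->
  (forall v, measurable (A `&` [set x | V x = v] `&` S)) ->
  (forall x, S x -> A x -> V x \in r) ->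
  measurable (A `&` S) /\ Prob A = \sum_(v <- r) Prob (A `&` [set x | V x = v]).
Proof.
elim: r A => [|v r IH] A /=.
  move=> _ _ Ar; have A0 : A `&` S = set0.
    by apply/seteqP; split => x // [Ax Sx]; have := Ar x Sx Ax.
  by rewrite A0 Prob0 ?big_nil.
move=> /andP[vr ur] mAV Ar.
pose A' := A `&` [set x | V x <> v].
have [mA' PA'] : measurable (A' `&` S) /\
    Prob A' = \sum_(v' <- r) Prob (A' `&` [set x | V x = v']).
  apply: IH => // [v'|x Sx [Ax /eqP Vxv]]; last first.
    by move: (Ar x Sx Ax); rewrite in_cons (negbTE Vxv).
  have [->|v'v] := eqVneq v' v.
    by rewrite [X in measurable X](_ : _ = set0) //; apply/seteqP; split=> x // [[[]]].
  rewrite [X in measurable X](_ : _ = A `&` [set x | V x = v'] `&` S) //.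
  apply/seteqP; split => x /=; first by move=> [[[Ax _] ->] Sx].
  by move=> [[Ax Vx] Sx]; do !split => //=; rewrite Vx; exact/eqP.
have AE : A = (A `&` [set x | V x = v]) `|` A'.
  apply/seteqP; split => x /=; last by case=> -[].
  by move=> Ax; have [|] := pselect (V x = v); [left|right].
have dis : A `&` [set x | V x = v] `&` A' `&` S = set0.
  by apply/seteqP; split => x // [[[_ Vx] [_ /(_ Vx)]]].
split; first by rewrite AE setIUl; exact: measurableU.
rewrite {1}AE ProbU // big_cons PA'; congr (_ + _).
apply: eq_big_seq => v' v'r; apply: eq_Prob; apply/seteqP; split => x /=.
  by case=> -[[Ax _] Vx] Sx.
by case=> -[Ax Vx] Sx; do !split => //; move=> Vv; move: vr; rewrite -Vv Vx v'r.
Qed.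

Definition joint Z W (c d : R) := Prob [set x | Z x = c /\ W x = d].

Lemma measurable_joint Z W c d : measurable_fun S Z -> measurable_fun S W ->
  measurable ([set x | Z x = c /\ W x = d] `&` S).
Proof.
move=> mZ mW; rewrite -[S in _ `&` S]setIid.
rewrite -[[set x | _ /\ _]]/([set x | Z x = c] `&` [set x | W x = d]) setIACA.
by apply: measurableI; exact: measurable_level.
Qed.

Lemma joint_swap Z W c d : joint W Z d c = joint Z W c d.
Proof. by apply: eq_Prob; congr (_ `&` _); apply/seteqP; split => x []. Qed.

Lemma Prob_pair_values Z W s (P : R -> R -> bool) : uniq s ->
  measurable_fun S Z -> measurable_fun S W ->
  (forall x, S x -> Z x \in s) -> (forall x, S x -> W x \in s) ->
  Prob [set x | P (Z x) (W x)] = \sum_(c <- s) \sum_(d <- s | P c d) joint Z W c d.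
Proof.
move=> us mZ mW sZ sW.
have pieceE c d : [set x | P (Z x) (W x)] `&` [set x | (Z x, W x) = (c, d)] =
    if P c d then [set x | Z x = c /\ W x = d] else set0.
  apply/seteqP; split => x /=; first by case=> Pzw [<- <-]; rewrite Pzw.
  by case: ifP => [Pcd [-> ->] | _ []].
pose r := [seq (c, d) | c <- s, d <- s].
have ur : uniq r by apply: allpairs_uniq => // -[? ?] [? ?] _ _ [-> ->].
have pieces (cd : R * R) :
    measurable ([set x | P (Z x) (W x)] `&` [set x | (Z x, W x) = cd] `&` S).
  case: cd => c d; rewrite pieceE; case: ifP => _; last by rewrite set0I.
  exact: measurable_joint.
have cover x : S x -> [set x | P (Z x) (W x)] x -> (Z x, W x) \in r.
  by move=> Sx _; apply: allpairs_f; [exact: sZ | exact: sW].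
have [_ ->] := Prob_sum_values ur pieces cover.
transitivity (\sum_(c <- s) \sum_(d <- s)
    Prob ([set x | P (Z x) (W x)] `&` [set x | (Z x, W x) = (c, d)])).
  exact: big_allpairs.
apply: eq_bigr => c _; rewrite [RHS]big_mkcond /=.
by apply: eq_bigr => d _; rewrite pieceE; case: ifP => _ //; exact/Prob0/set0I.
Qed.

Lemma Prob_marginal Z W s c : uniq s -> measurable_fun S Z -> measurable_fun S W ->
  (forall x, S x -> W x \in s) ->
  Prob [set x | Z x = c] = \sum_(d <- s) joint Z W c d.
Proof.
move=> us mZ mW sW.
have pieces d : measurable ([set x | Z x = c] `&` [set x | W x = d] `&` S).
  exact: measurable_joint.
by have [_ ->] := Prob_sum_values us pieces (fun x Sx _ => sW x Sx).
Qed.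

Lemma Prob_total Z s : uniq s -> measurable_fun S Z -> (forall x, S x -> Z x \in s) ->
  \sum_(c <- s) Prob [set x | Z x = c] = 1.
Proof.
move=> us mZ sZ.
have pieces c : measurable ([set: R] `&` [set x | Z x = c] `&` S).
  by rewrite setTI; exact: measurable_level.
have [_ PT] := Prob_sum_values us pieces (fun x Sx _ => sZ x Sx).
by rewrite -ProbT PT; apply: eq_bigr => c _; rewrite setTI.
Qed.

Lemma bigmax_below (s : seq R) u :
  let b := \big[Num.max/(u - 1)]_(c <- s | c < u) c in
  b < u /\ forall c, c \in s -> c < u -> c <= b.
Proof.
elim: s => [|c s [IH1 IH2]] /=; first by rewrite big_nil ltrBlDr ltrDl ltr01.
rewrite big_cons; case: ifP => cu.
  split=> [|c']; first by rewrite gt_max cu IH1.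
  rewrite in_cons => /orP[/eqP -> _|c's c'u]; first by rewrite le_max lexx.
  by rewrite le_max IH2 ?orbT.
split=> // c'; rewrite in_cons => /orP[/eqP -> |]; [by rewrite cu | exact: IH2].
Qed.

(* The big max is the largest value of s below u (or u - 1 if there is none), so on S
   the event Z < u is the event Z <= that value. *)
Lemma Prob_level_cdfX Z s u : measurable_fun S Z -> (forall x, S x -> Z x \in s) ->
  Prob [set x | Z x = u] =
    cdfX Z u - cdfX Z (\big[Num.max/(u - 1)]_(c <- s | c < u) c).
Proof.
move=> mZ sZ; have [bu below] := bigmax_below s u.
set b := \big[_/_]_(c <- s | _) _ in bu below *.
rewrite /cdfX (@eq_Prob [set x | Z x <= u] ([set x | Z x = u] `|` [set x | Z x <= b])).
  rewrite ProbU ?addrK //; first exact: measurable_level.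
    exact: measurable_preimage mZ (measurable_itv `]-oo, b]).
  apply/seteqP; split => x // [[Zu Zb] _].
  by move: Zb; rewrite /= Zu leNgt bu.
apply/seteqP; split => x /= [Zxu Sx]; split => //.
  have [->|neq] := eqVneq (Z x) u; [by left | right].
  by apply: below; [exact: sZ | rewrite lt_neqAle neq].
by case: Zxu => [->|/le_trans->] //; exact: ltW.
Qed.

End Probability.

Section Stacking.
Variables (R : realType) (I : Type) (p : I -> R).
Hypothesis p_ge0 : forall i, 0 <= p i.
Local Notation S := (@Sset R).
Local Notation leb := (@lebesgue_measure R).

(* Intervals of lengths p i (i in r) laid end to end from 0: stack r x is the index of
   the one containing x, None past their end. *)
Fixpoint stack (r : seq I) (x : R) : option I :=
  if r is i :: r' then if x < p i then Some i else stack r' (x - p i) else None.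

Lemma lebesgue_stack (Q : option I -> bool) r c :
  let A := [set x | c <= x < c + \sum_(i <- r) p i /\ Q (stack r (x - c))] in
  measurable A /\ leb A = (\sum_(i <- r | Q (Some i)) p i)%:E.
Proof.
elim: r c => [|i r IH] c /=; set A := [set x | _].
  have -> : A = set0.
    by apply/seteqP; split => x // [/andP[/le_lt_trans h /h]]; rewrite big_nil addr0 ltxx.
  by rewrite measure0 big_nil.
have r_ge0 : 0 <= \sum_(j <- r) p j by rewrite sumr_ge0.
pose A1 := if Q (Some i) then [set` `[c, c + p i[] else set0.
pose A2 := [set x | c + p i <= x < c + p i + \sum_(j <- r) p j /\
                    Q (stack r (x - (c + p i)))].
have AE : A = A1 `|` A2.
  rewrite /A big_cons addrA; apply/seteqP; split => x /=.
    move=> [/andP[cx xt]]; rewrite ltrBlDl; case: ifP => xp Qx.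
      by left; rewrite /A1 Qx /= in_itv /= cx xp.
    by right; split; [rewrite xt andbT leNgt xp | rewrite opprD addrA].
  rewrite /A1; case=> [|[/andP[h1 h2] Qx]].
    case: ifP => Qi //=; rewrite in_itv /= => /andP[cx xp].
    split; last by rewrite ltrBlDl xp.
    by rewrite cx /= (lt_le_trans xp) // lerDl.
  have cx : c <= x by apply: le_trans h1; rewrite lerDl.
  by rewrite cx h2 ltrBlDl ltNge h1 /= -addrA -opprD.
have [mA2 lA2] : measurable A2 /\ leb A2 = (\sum_(j <- r | Q (Some j)) p j)%:E.
  exact: IH.
have [mA1 lA1] : measurable A1 /\ leb A1 = (if Q (Some i) then p i else 0)%:E.
  rewrite /A1; case: ifP => _; last by rewrite measure0.
  split => //; rewrite lebesgue_measure_itv /= lte_fin ltrDl.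
  case: ltP => [_|pi0]; first by rewrite -EFinD addrAC subrr add0r.
  by have -> : p i = 0 by apply/le_anti; rewrite pi0 p_ge0.
have A12 : A1 `&` A2 = set0.
  apply/seteqP; split => x //; rewrite /A1 /A2; case: ifP => _ [] //=.
  by rewrite in_itv /= => /andP[_ /lt_le_trans h] [/andP[/h]]; rewrite ltxx.
rewrite AE; split; first exact: measurableU.
transitivity (leb A1 + leb A2)%E; first exact: measureU.
by rewrite lA1 lA2 big_cons; case: ifP => _; rewrite ?EFinD ?add0r.
Qed.

Lemma Prob_stack (Q : option I -> bool) r : \sum_(i <- r) p i = 1 ->
  measurable ([set x | Q (stack r x)] `&` S) /\
  Prob [set x | Q (stack r x)] = \sum_(i <- r | Q (Some i)) p i.
Proof.
move=> r1; have /= [] := lebesgue_stack Q r 0; rewrite add0r r1.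
set A0 := [set x | _] => mA0 lA0.
pose A1 := [set x : R | x = 1 /\ Q (stack r 1)].
have AE : [set x | Q (stack r x)] `&` S = A0 `|` A1.
  apply/seteqP; split => x /=.
    move=> [Qx /andP[x0 x1]]; have [xl1|xg1] := ltP x 1.
      by left; rewrite /A0 /= subr0 x0 xl1.
    right; have xe : x = 1 by apply/le_anti; rewrite x1.
    by split; rewrite -?xe.
  case=> [[/andP[x0 x1]]|[-> Q1]]; last by rewrite /Sset /= ler01 lexx.
  by rewrite subr0 /Sset /= x0 ltW.
have [mA1 lA1] : measurable A1 /\ leb A1 = 0%E.
  rewrite /A1; case: (Q (stack r 1)).
    rewrite (_ : [set x | x = 1 /\ true] = [set 1]); last by apply/seteqP; split=> x /= [].
    by split; [exact: measurable_set1 | exact: lebesgue_measure_set1].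
  by rewrite (_ : [set x | x = 1 /\ false] = set0) ?measure0 //; apply/seteqP; split=> x [].
rewrite AE; split; first exact: measurableU.
rewrite /Prob AE; transitivity (fine (leb A0)); last by rewrite lA0.
by congr fine; exact: measureU0.
Qed.

End Stacking.

Section Coupling.
Variable R : realType.
Local Notation S := (@Sset R).

Lemma circulation_coupling n (q : 'I_n -> 'I_n -> R) :
  circulation q -> \sum_i \sum_j q i j = 1 ->
  exists L : nat -> R -> 'I_n,
    [/\ forall k (Q : pred 'I_n), measurable ([set x | Q (L k x)] `&` S),
        L n`! = L 0%N &
        forall k i j, Prob [set x | L k x = i /\ L k.+1 x = j] = q i j].
Proof.
move=> cq q1; have [i0 _] : exists i0 : 'I_n, True.
  case: n q q1 {cq} => [|n'] q; last by exists ord0.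
  by rewrite big_ord0 => /eqP; rewrite eq_sym oner_eq0.
have [m [c [w [c0 wper qE]]]] := circulation_decomposition cq.
pose M := n`!.
(* A state picks a walk b together with a rotation l of it, with probability c b each;
   L k maps it to the k-th vertex of the rotated walk. *)
pose lab k (b : option ('I_m * 'I_M)) := if b is Some b then w b.1 (b.2 + k %% M)%N else i0.
pose stk := stack (fun b : 'I_m * 'I_M => c b.1) (enum {: 'I_m * 'I_M}).
have c_ge0 (b : 'I_m * 'I_M) : 0 <= c b.1 by [].
have c_tot : \sum_(b <- enum {: 'I_m * 'I_M}) c b.1 = 1.
  transitivity (\sum_(b : 'I_m * 'I_M) c b.1); first by rewrite big_enum.
  rewrite -(pair_bigA _ (fun b _ => c b)) /= -q1 (decomposition_mass qE) mulr_suml.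
  by apply: eq_bigr => b _; rewrite sumr_const card_ord mulr_natr.
exists (fun k x => lab k (stk x)); split.
- by move=> k Q; have [] := Prob_stack c_ge0 (Q \o lab k) c_tot.
- by apply: funext => x; rewrite /lab /M modnn mod0n.
move=> k i j; pose Q b := (lab k b == i) && (lab k.+1 b == j).
rewrite (_ : [set x | _ /\ _] = [set x | Q (stk x)]); last first.
  apply/seteqP; split => x /=; rewrite /Q.
    by move=> [-> ->]; rewrite !eqxx.
  by move=> /andP[/eqP -> /eqP ->].
have [_ ->] := Prob_stack c_ge0 Q c_tot.
rewrite big_enum_cond /=.
transitivity (\sum_(b < m) \sum_(l < M | Q (Some (b, l))) c b).
  by rewrite pair_big_dep; apply: eq_big => -[b l].
rewrite qE; apply: eq_bigr => b _.
rewrite -(transitions_shift k i j (wper b)) /transitions big_mkord natr_sum mulr_sumr.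
rewrite big_mkcond /=; apply: eq_bigr => l _.
by rewrite /Q /lab /= !has_period_addmodn // addnS addSn; case: ifP; rewrite ?mulr1 ?mulr0.
Qed.

Lemma finite_range_cover xl xu X Y : inL xl xu X -> inL xl xu Y ->
  exists s : seq R, [/\ uniq s, forall x, S x -> X x \in s,
    forall x, S x -> Y x \in s & forall c, c \in s -> xl <= c <= xu].
Proof.
move=> [_ bX /finite_seqP [sX eX]] [_ bY /finite_seqP [sY eY]].
have inX x : S x -> X x \in sX.
  by move=> Sx; change ([set` sX] (X x)); rewrite -eX; exists x.
have inY x : S x -> Y x \in sY.
  by move=> Sx; change ([set` sY] (Y x)); rewrite -eY; exists x.
exists (undup (sX ++ sY)); split=> [|x Sx|x Sx|c]; rewrite ?undup_uniq ?mem_undup ?mem_cat.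
- by [].
- by rewrite inX.
- by rewrite (inY x Sx) orbT.
case/orP => [cX|cY].
  have [x Sx <-] : (X @` S) c by rewrite eX.
  exact: bX.
have [x Sx <-] : (Y @` S) c by rewrite eY.
exact: bY.
Qed.

Lemma joint_circulation X Y s : uniq s -> measurable_fun S X -> measurable_fun S Y ->
  (forall x, S x -> X x \in s) -> (forall x, S x -> Y x \in s) -> cdfX X = cdfX Y ->
  circulation (fun i j : 'I_(size s) => joint X Y s`_i s`_j) /\
  \sum_(i < size s) \sum_(j < size s) joint X Y s`_i s`_j = 1.
Proof.
move=> us mX mY sX sY eF.
have sum_s (F : R -> R) : \sum_(c <- s) F c = \sum_(i < size s) F s`_i.
  by rewrite (big_nth 0) big_mkord.
split; first split.
- by move=> i j; apply: Prob_ge0; exact: measurable_joint.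
- move=> i; transitivity (Prob [set x | X x = s`_i]).
    by rewrite (Prob_marginal _ us mX mY sY) sum_s.
  rewrite (Prob_level_cdfX _ mX sX) eF -(Prob_level_cdfX _ mY sY).
  rewrite (Prob_marginal _ us mY mX sX) sum_s.
  by apply: eq_bigr => j _; rewrite joint_swap.
rewrite -(Prob_total us mX sX) sum_s; apply: eq_bigr => i _.
by rewrite (Prob_marginal _ us mX mY sY) sum_s.
Qed.

Lemma cyclic_coupling xl xu X Y : inL xl xu X -> inL xl xu Y -> cdfX X = cdfX Y ->
  exists (Z : nat -> R -> R) (M : nat),
    [/\ forall k, inL xl xu (Z k), (0 < M)%N, Z M = Z 0%N &
        forall k (P : R -> R -> bool),
          Prob [set x | P (Z k x) (Z k.+1 x)] = Prob [set x | P (X x) (Y x)]].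
Proof.
move=> LX LY eF; have [mX _ _] := LX; have [mY _ _] := LY.
have [s [us sX sY sb]] := finite_range_cover LX LY.
have [cq q1] := joint_circulation us mX mY sX sY eF.
have [L [mL LM lawL]] := circulation_coupling cq q1.
pose Z k x := s`_(L k x).
have sZ k x : Z k x \in s by exact: mem_nth.
have mZ k : measurable_fun S (Z k).
  move=> _ B mB; rewrite setIC.
  suff -> : Z k @^-1` B = [set x | `[< B s`_(L k x) >]].
    exact: (mL k (fun i => `[< B s`_i >])).
  by apply/seteqP; split => x; rewrite /= asboolE.
have s_inj (i j : 'I_(size s)) : s`_i = s`_j -> i = j.
  by move/eqP; rewrite nth_uniq // => /eqP/val_inj.
have jointZ k (i j : 'I_(size s)) : joint (Z k) (Z k.+1) s`_i s`_j = joint X Y s`_i s`_j.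
  rewrite -(lawL k); congr Prob; apply/seteqP; split => x /= [Zi Zj].
    split; apply: s_inj; [exact: Zi | exact: Zj].
  by rewrite /Z Zi Zj.
exists Z, (size s)`!; split.
- move=> k; split => // [x _|]; first exact/sb/sZ.
  by apply: (sub_finite_set _ (finite_seq s)) => _ [x _ <-]; exact: sZ.
- exact: fact_gt0.
- by rewrite /Z LM.
move=> k P; rewrite (Prob_pair_values P us (mZ k) (mZ k.+1)) //.
rewrite (Prob_pair_values P us mX mY) //.
rewrite [LHS](big_nth 0) [RHS](big_nth 0) !big_mkord; apply: eq_bigr => i _.
rewrite [LHS](big_nth 0) [RHS](big_nth 0) !big_mkord; apply: eq_bigr => j _.
exact: jointZ.
Qed.

End Coupling.

Lemma regret_lottery_eq (R : realType) (psi : R -> R -> R) (Z W Z' W' : R -> R) :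
  (forall P : R -> R -> bool,
    Prob [set x | P (Z x) (W x)] = Prob [set x | P (Z' x) (W' x)]) ->
  regret_lottery psi Z W = regret_lottery psi Z' W'.
Proof. by move=> law; apply: funext => t; exact: (law (fun c d => psi c d <= t)). Qed.

Lemma pref_cycle (R : realType) (xl xu : R) (pref : (R -> R) -> (R -> R) -> Prop)
    (Z : nat -> R -> R) M :
  complete_rel xl xu pref -> transitive_rel xl xu pref ->
  (forall k, inL xl xu (Z k)) -> (0 < M)%N -> Z M = Z 0%N ->
  (forall k, pref (Z k) (Z k.+1)) -> pref (Z 1%N) (Z 0%N).
Proof.
move=> complete trans LZ M0 ZM step; rewrite -ZM -(prednK M0).
elim: M.-1 => [|m IH]; first by case: (complete _ _ (LZ 1%N) (LZ 1%N)).
exact: trans (LZ _) (LZ _) (LZ _) IH (step _).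
Qed.

Unset Implicit Arguments.

Theorem proposition1 (R : realType) (xl xu : R)
  (pref : (R -> R) -> (R -> R) -> Prop) :
  complete_rel xl xu pref ->
  transitive_rel xl xu pref ->
  continuous_in_prob xl xu pref ->
  statewise_monotone xl xu pref ->
  regret_based xl xu pref ->
  forall X Y : R -> R, inL xl xu X -> inL xl xu Y ->
    cdfX X = cdfX Y -> indiff pref X Y.
Proof.
move=> complete trans _ _ [psi [V [_ _ regret]]].
suff pref_sym : forall X Y, inL xl xu X -> inL xl xu Y -> cdfX X = cdfX Y ->
    pref X Y -> pref Y X.
  by move=> X Y LX LY eF; case: (complete X Y LX LY) => ?; split=> //; exact: pref_sym.
move=> X Y LX LY eF XY; have [Z [M [LZ M0 ZM law]]] := cyclic_coupling LX LY eF.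
have step k : pref (Z k) (Z k.+1).
  apply/(regret _ _ (LZ _) (LZ _)).
  by rewrite (regret_lottery_eq psi (law k)); apply/regret.
have /(regret _ _ (LZ _) (LZ _)) := pref_cycle complete trans LZ M0 ZM step.
by rewrite (regret_lottery_eq psi (fun P => law 0%N (fun c d => P d c))) => /regret; apply.
Qed.
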